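(* Let $p\in(0,1)$ and let $\eta,c$ be positive numbers with $\eta\ge 4e^p/p$ and $c\le p\eta$. Then $$-c\,\Upsilon(1/c)+c\log f(2-\eta/c)<\max\{\eta(1-p)\log(1-p^3),\,-0.15p\eta\}-1.$$
   Context: $\Upsilon:(0,\infty)\to\mathbb{R}$ is defined by $\Upsilon(x)=x-1-\log x$ for $0<x\le1$ and $\Upsilon(x)=0$ for $x>1$. $f:(-\infty,1]\to\mathbb{R}$ is defined by $f(x)=(2-x)^{2-x}p(1-p)^{1-x}(1-x)^{x-1}$, with the convention $0^0=1$. $\log$ is natural. *)

From Stdlib Require Import Reals.
Open Scope R_scope.

(* Real power a^b for a >= 0, with the convention 0^0 = 1 (and 0^b = 0 for b <> 0).
   For a > 0 it is Rpower a b = exp (b * ln a). *)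
Definition rpow (a b : R) : R :=
  if Req_EM_T a 0 then (if Req_EM_T b 0 then 1 else 0) else Rpower a b.

Definition Upsilon (x : R) : R :=
  if Rle_dec x 1 then x - 1 - ln x else 0.

Definition f_fun (p x : R) : R :=
  rpow (2 - x) (2 - x) * p * rpow (1 - p) (1 - x) * rpow (1 - x) (x - 1).

(* Put λ = p η and t = η / c > 1. Expanding the logarithms,
   c log f(2 - t) = c log(λ/c) + (η - c) log(η(1 - p)/(η - c)),
   and [log y <= y - 1] bounds the second term by c - λ. The same inequality,
   applied once more in each of the cases c >= 1 and c < 1, bounds
   -c Υ(1/c) + c log(λ/c) by 2√λ - c - 1, so the left-hand side is at most
   2√λ - λ - 1. Since λ >= 4 e^p, this beats -η p^3 <= η(1 - p) log(1 - p^3)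
   when p <= 0.35 and -0.15 λ when p > 0.35. *)

From Stdlib Require Import Reals Lra Psatz.
Open Scope R_scope.

Lemma rpow_Rpower (a b : R) : 0 < a -> rpow a b = Rpower a b.
Proof. intro Ha. unfold rpow. destruct (Req_EM_T a 0); [lra | reflexivity]. Qed.

Lemma ln_div (x y : R) : 0 < x -> 0 < y -> ln (x / y) = ln x - ln y.
Proof.
  intros Hx Hy. unfold Rdiv.
  rewrite ln_mult, ln_Rinv by (try apply Rinv_0_lt_compat; assumption). ring.
Qed.

Lemma ln_sqrt (x : R) : 0 < x -> ln (sqrt x) = ln x / 2.
Proof.
  intro Hx. assert (Hs : 0 < sqrt x) by now apply sqrt_lt_R0.
  rewrite <- (sqrt_sqrt x) at 2 by lra. rewrite ln_mult by assumption. field.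
Qed.

Lemma ln_le_sub_1 (y : R) : 0 < y -> ln y <= y - 1.
Proof.
  intro Hy. pose proof (exp_ineq1_le (ln y)) as H. rewrite exp_ln in H by exact Hy. lra.
Qed.

Lemma mul_ln_div_le (a x : R) : 0 < a -> 0 < x -> a * ln (x / a) <= x - a.
Proof.
  intros Ha Hx.
  pose proof (ln_le_sub_1 (x / a) ltac:(apply Rdiv_lt_0_compat; lra)) as H.
  apply (Rmult_le_compat_l a) in H; [|lra].
  replace (a * (x / a - 1)) with (x - a) in H by (field; lra). exact H.
Qed.

Lemma ln_f_fun_two_sub (p t : R) : 0 < p < 1 -> 1 < t ->
  ln (f_fun p (2 - t)) = t * ln t + ln p + (t - 1) * ln (1 - p) - (t - 1) * ln (t - 1).
Proof.
  intros Hp Ht. unfold f_fun.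
  replace (2 - (2 - t)) with t by ring.
  replace (1 - (2 - t)) with (t - 1) by ring.
  replace (2 - t - 1) with (- (t - 1)) by ring.
  rewrite !rpow_Rpower by lra.
  assert (Pos : forall a b, 0 < Rpower a b) by (intros; apply exp_pos).
  rewrite !ln_mult by (repeat apply Rmult_lt_0_compat; auto; lra).
  rewrite !ln_Rpower. ring.
Qed.

Lemma c_ln_f_fun (p eta c : R) : 0 < p < 1 -> 0 < c < eta ->
  c * ln (f_fun p (2 - eta / c))
  = c * ln (p * eta / c) + (eta - c) * ln (eta * (1 - p) / (eta - c)).
Proof.
  intros Hp Hc.
  assert (Ht : 1 < eta / c).
  { apply (Rmult_lt_reg_r c); [lra|]. unfold Rdiv. rewrite Rmult_assoc, Rinv_l; lra. }
  rewrite ln_f_fun_two_sub by assumption.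
  replace (eta / c - 1) with ((eta - c) / c) by (field; lra).
  rewrite !ln_div, !ln_mult by (try apply Rmult_lt_0_compat; lra).
  field. lra.
Qed.

Lemma Upsilon_inv_bound (c lam : R) : 0 < c -> 1 <= lam ->
  - c * Upsilon (1 / c) + c * ln (lam / c) <= 2 * sqrt lam - c - 1.
Proof.
  intros Hc Hlam.
  assert (Hs : 0 < sqrt lam) by (apply sqrt_lt_R0; lra).
  assert (Hln_lam : ln lam = 2 * ln (sqrt lam)) by (rewrite ln_sqrt by lra; field).
  unfold Upsilon. destruct (Rle_dec (1 / c) 1) as [Hc1 | Hc1].
  - (* c >= 1: two factors 1/c combine into 2 c log(√λ / c) *)
    pose proof (mul_ln_div_le c (sqrt lam) Hc Hs) as H.
    rewrite !ln_div in * by lra. rewrite ln_1, Hln_lam.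
    replace (- c * (1 / c - 1 - (0 - ln c))) with (c - 1 - c * ln c) by (field; lra).
    lra.
  - assert (Hc1' : c < 1).
    { apply Rnot_le_lt in Hc1. apply (Rmult_lt_reg_r (/ c)); [now apply Rinv_0_lt_compat|].
      rewrite Rinv_r by lra. lra. }
    pose proof (mul_ln_div_le c 1 Hc ltac:(lra)) as Hinv.
    pose proof (mul_ln_div_le 1 (sqrt lam) ltac:(lra) Hs) as Hsqrt.
    assert (Hln_pos : 0 <= ln lam).
    { destruct (Req_dec lam 1) as [-> | Hne]; [rewrite ln_1; lra|].
      rewrite <- ln_1. left. apply ln_increasing; lra. }
    rewrite !ln_div in * by lra. rewrite ln_1 in *.
    replace (sqrt lam / 1) with (sqrt lam) in Hsqrt by field.
    nra.
Qed.

Lemma ln_1_sub_cube_bound (p eta : R) : 0 <= p < 1 -> 0 <= eta ->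
  - (eta * p ^ 3) <= eta * (1 - p) * ln (1 - p ^ 3).
Proof.
  intros Hp Heta.
  assert (Hp3 : p ^ 3 <= p) by (simpl; nra).
  assert (Hp3' : 0 <= p ^ 3) by (apply pow_le; lra).
  assert (Hq : 0 < 1 - p ^ 3) by lra.
  (* log(1 - p^3) <= 0, and the factor 1 - p <= 1 - p^3 only helps *)
  pose proof (ln_le_sub_1 (1 - p ^ 3) Hq) as Hneg.
  pose proof (mul_ln_div_le (1 - p ^ 3) 1 Hq ltac:(lra)) as H.
  rewrite ln_div, ln_1 in H by lra.
  set (L := ln (1 - p ^ 3)) in *.
  assert (0 <= (p - p ^ 3) * - L) by (apply Rmult_le_pos; lra).
  assert (- p ^ 3 <= (1 - p) * L).
  { replace ((1 - p) * L) with ((p - p ^ 3) * - L - (1 - p ^ 3) * (0 - L)) by ring. lra. }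
  replace (eta * (1 - p) * L) with (eta * ((1 - p) * L)) by ring.
  nra.
Qed.

Lemma two_sqrt_sub_lt_small_p (p lam : R) : 0 < p <= 35 / 100 -> 4 * exp p <= lam ->
  2 * sqrt lam - lam < - lam * p ^ 2.
Proof.
  intros [Hp0 Hp1] Hlam.
  pose proof (exp_ineq1_le p) as Hexp.
  assert (Hs : 0 < sqrt lam) by (apply sqrt_lt_R0; lra).
  assert (Hss : sqrt lam * sqrt lam = lam) by (apply sqrt_sqrt; lra).
  assert (Hq : 0 < 1 - p ^ 2) by (simpl; nra).
  assert (Hpoly : 1 < (1 + p) * (1 - p ^ 2) ^ 2) by (simpl; nra).
  assert (H4 : 4 < lam * (1 - p ^ 2) ^ 2).
  { assert (0 < (1 - p ^ 2) ^ 2) by (apply pow_lt; lra). nra. }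
  assert (2 < sqrt lam * (1 - p ^ 2)).
  { assert (0 < sqrt lam * (1 - p ^ 2)) by nra.
    rewrite <- Hss in H4. simpl in H4. nra. }
  rewrite <- Hss at 2 3. nra.
Qed.

Lemma two_sqrt_sub_lt_large_p (p lam : R) : 35 / 100 < p -> 4 * exp p <= lam ->
  2 * sqrt lam - lam < - (15 / 100) * lam.
Proof.
  intros Hp Hlam.
  assert (Hexp : (1 + p / 3) ^ 3 <= exp p).
  { replace (exp p) with (exp (p / 3) ^ 3).
    - apply pow_incr. pose proof (exp_ineq1_le (p / 3)). lra.
    - simpl. rewrite Rmult_1_r, <- !exp_plus. f_equal. field. }
  assert (Hlam5 : 5569 / 1000 < lam) by (simpl in Hexp; nra).
  assert (Hs : 0 < sqrt lam) by (apply sqrt_lt_R0; lra).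
  assert (Hss : sqrt lam * sqrt lam = lam) by (apply sqrt_sqrt; lra).
  assert (236 / 100 < sqrt lam) by nra.
  nra.
Qed.

Theorem lemma8 (p eta c : R) :
  0 < p < 1 -> 0 < eta -> 0 < c ->
  eta >= 4 * exp p / p -> c <= p * eta ->
  - c * Upsilon (1 / c) + c * ln (f_fun p (2 - eta / c))
    < Rmax (eta * (1 - p) * ln (1 - p ^ 3)) (- (15 / 100) * p * eta) - 1.
Proof.
  intros Hp Heta Hc Heta_ge Hc_le.
  set (lam := p * eta).
  assert (Hlam : 4 * exp p <= lam).
  { unfold lam. apply Rge_le in Heta_ge.
    apply (Rmult_le_compat_l p) in Heta_ge; [|lra].
    replace (p * (4 * exp p / p)) with (4 * exp p) in Heta_ge by (field; lra). lra. }
  pose proof (exp_ineq1_le p).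
  assert (Hc_eta : c < eta) by (unfold lam in *; nra).
  rewrite c_ln_f_fun by lra.
  pose proof (mul_ln_div_le (eta - c) (eta * (1 - p)) ltac:(lra) ltac:(nra)) as Hsecond.
  pose proof (Upsilon_inv_bound c lam Hc ltac:(lra)) as Hfirst.
  fold lam.
  assert (Hlhs : - c * Upsilon (1 / c) + (c * ln (lam / c)
                   + (eta - c) * ln (eta * (1 - p) / (eta - c)))
                 <= 2 * sqrt lam - lam - 1) by (unfold lam in *; lra).
  destruct (Rle_dec p (35 / 100)) as [Hsmall | Hlarge].
  - pose proof (two_sqrt_sub_lt_small_p p lam ltac:(lra) Hlam).
    pose proof (ln_1_sub_cube_bound p eta ltac:(lra) ltac:(lra)).
    pose proof (Rmax_l (eta * (1 - p) * ln (1 - p ^ 3)) (- (15 / 100) * p * eta)).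
    assert (eta * p ^ 3 = lam * p ^ 2) by (unfold lam; ring).
    lra.
  - pose proof (two_sqrt_sub_lt_large_p p lam ltac:(lra) Hlam).
    pose proof (Rmax_r (eta * (1 - p) * ln (1 - p ^ 3)) (- (15 / 100) * p * eta)).
    unfold lam in *. lra.
Qed.
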